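(* Let $R$ be a discrete valuation ring of characteristic $p>0$ with field of fractions $K$. Let $H$ be a primitively generated $K$-Hopf algebra of rank $p^n$, let $t_1,\dots,t_n$ be a $K$-basis of $\mathrm{Prim}(H)$ with associated matrix $B\in M_n(R)$ (so $t_i^p=\sum_j b_{j,i}t_j$). For $\Theta=(\theta_{j,i})\in\mathrm{GL}_n(K)$ with $A=\Theta^{-1}B\Theta^{(p)}\in M_n(R)$, let $H_\Theta=R[\{\sum_j\theta_{j,i}t_j:1\le i\le n\}]\subseteq H$ be the corresponding $R$-Hopf order (the image of the $R$-Hopf algebra with associated matrix $A$ under $u_i\mapsto\sum_j\theta_{j,i}t_j$). Let $\Theta$ be such a matrix and let $\Theta'\in \mathrm{GL}_n(K)$. Then the following are equivalent: (a) $A'=\Theta'^{-1}B\Theta'^{(p)}\in M_n(R)$ and $H_{\Theta'}=H_\Theta$ (i.e. $A$ and $A'$ are associated to the same Hopf order); (b) $\Theta'=\Theta U$ for some $U\in\mathrm{GL}_n(R)$.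
   Context: $\Theta^{(p)}$ denotes the matrix obtained from $\Theta$ by raising each entry to the $p$-th power. All Hopf algebras are commutative, cocommutative, finitely generated projective, of $p$-power rank. $t$ is primitive if $\Delta(t)=t\otimes1+1\otimes t$; $\mathrm{Prim}(H)$ is the module of primitives; $H$ is primitively generated if generated as an algebra by its primitives. An $R$-Hopf order in a $K$-Hopf algebra $H$ is a finitely generated projective $R$-submodule which is an $R$-Hopf algebra under the inherited operations and spans $H$ over $K$. *)

From HB Require Import structures.
From mathcomp Require Import all_boot all_order all_algebra all_field.
Set Implicit Arguments. Unset Strict Implicit. Unset Printing Implicit Defensive.
Import Order.TTheory GRing.Theory Num.Theory.
Local Open Scope ring_scope.

(* Discrete valuation rings, realised (as usual) inside their fraction field. *)
Definition discrete_valuation (K : fieldType) (v : K -> int) : Prop :=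
  [/\ forall x y : K, x != 0 -> y != 0 -> v (x * y) = v x + v y,
      forall x y : K, x != 0 -> y != 0 -> x + y != 0 ->
        Num.min (v x) (v y) <= v (x + y)
    & forall k : int, exists x : K, x != 0 /\ v x = k].

Definition is_dvr_in (K : fieldType) (R : {pred K}) : Prop :=
  exists v : K -> int, discrete_valuation v /\
    forall x : K, (x \in R) = (x == 0) || (0 <= v x).

(* Tensor products H (x) H and H (x) H (x) H of a finite-dimensional K-space  *)
(* in coordinates w.r.t. the canonical basis e = vbasis {:H}.                 *)
Section Hopf.
Variables (K : fieldType) (H : falgType K).

Definition hdim := \dim {:H}.
Definition hb (i : 'I_hdim) : H := tnth (vbasis {:H}) i.
Definition hc (i : 'I_hdim) (x : H) : K := coord (vbasis {:H}) i x.

Definition tens2 := 'M[K]_hdim.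
Definition tens (u v : H) : tens2 := \matrix_(i, j) (hc i u * hc j v).

(* multiplication on H (x) H: (a (x) b)(c (x) d) = ac (x) bd, bilinearly *)
Definition tmul (X Y : tens2) : tens2 :=
  \sum_(i < hdim) \sum_(j < hdim) \sum_(k < hdim) \sum_(l < hdim)
     (X i j * Y k l) *: tens (hb i * hb k) (hb j * hb l).

Definition is_cc_hopf (D : H -> tens2) (eps : H -> K) (S : H -> H) : Prop :=
  ( forall x y : H, x * y = y * x) /\
      (forall (a : K) (x y : H), D (a *: x + y) = a *: D x + D y)
        /\ D 1 = tens 1 1 /\ (forall x y, D (x * y) = tmul (D x) (D y)) /\
      (forall (a : K) (x y : H), eps (a *: x + y) = a * eps x + eps y)
        /\ eps 1 = 1 /\ (forall x y, eps (x * y) = eps x * eps y) /\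
      (* coassociativity: (D (x) id) D = (id (x) D) D *)
      (forall (x : H) (a b c : 'I_hdim),
         \sum_(i < hdim) D x i c * D (hb i) a b
         = \sum_(j < hdim) D x a j * D (hb j) b c) /\
      (forall x : H,
         \sum_(i < hdim) \sum_(j < hdim) (D x i j * eps (hb i)) *: hb j = x
         /\ \sum_(i < hdim) \sum_(j < hdim) (D x i j * eps (hb j)) *: hb i = x) /\
      (* antipode: linear, and m (S (x) id) D = m (id (x) S) D = eta eps *)
      (forall (a : K) (x y : H), S (a *: x + y) = a *: S x + S y)
        /\ (forall x : H,
         \sum_(i < hdim) \sum_(j < hdim) D x i j *: (S (hb i) * hb j) = eps x *: 1
         /\ \sum_(i < hdim) \sum_(j < hdim) D x i j *: (hb i * S (hb j)) = eps x *: 1) /\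
  ( forall x : H, (D x)^T = D x).

Definition primitive (D : H -> tens2) (x : H) : Prop := D x = tens x 1 + tens 1 x.

Definition primv (D : H -> tens2) : {vspace H} :=
  lker (linfun (fun x : H => D x - tens x 1 - tens 1 x)).

Definition prim_generated (D : H -> tens2) : Prop :=
  agenv (primv D) = fullv.

(* the R-subalgebra R[s_1,...,s_n] of H generated by the s_i *)
Definition Rgen (R : {pred K}) (n : nat) (s : 'I_n -> H) (x : H) : Prop :=
  forall P : H -> Prop,
    (forall i, P (s i)) -> (forall r, r \in R -> P (r%:A)) ->
    (forall u v, P u -> P v -> P (u + v)) ->
    (forall u v, P u -> P v -> P (u * v)) -> P x.

Definition mxcomb (n : nat) (Th : 'M[K]_n) (t : 'I_n -> H) (i : 'I_n) : H :=
  \sum_(j < n) Th j i *: t j.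

End Hopf.

Definition frobmx (K : fieldType) (p n : nat) (M : 'M[K]_n) : 'M[K]_n :=
  map_mx (fun x => x ^+ p) M.

From HB Require Import structures.
From mathcomp Require Import all_boot all_order all_algebra all_field.
From mathcomp Require Import zify.
Set Implicit Arguments. Unset Strict Implicit. Unset Printing Implicit Defensive.
Import Order.TTheory GRing.Theory Num.Theory.
Local Open Scope ring_scope.

(* Let s_i = sum_j theta_{j,i} t_j be the generators of H_Theta, so that
   s_i^p = sum_j a_{j,i} s_j with A over R.  Reducing exponents modulo p shows
   that R[s] is the R-span of the p^n monomials s^e with 0 <= e_i < p; these
   monomials span H as a K-algebra, so by the dimension count they form a
   K-basis of H.  Hence if s'_j = sum_i u_{i,j} s_i lies in R[s], comparing
   coordinates (the s_i are themselves reduced monomials as p > 1) gives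
   u_{i,j} in R, i.e. Theta^-1 Theta' is over R.  Using this in both
   directions gives (a) -> (b); (b) -> (a) is a direct computation. *)

Lemma dvr_semiring_closed (K : fieldType) (R : {pred K}) :
  is_dvr_in R -> GRing.semiring_closed R.
Proof.
case=> v [[vM vD _] inR]; have v1 : v 1 = 0.
  by apply: (addrI (v 1)); rewrite addr0 -vM ?mulr1 ?oner_neq0.
split; split=> [|x y]; rewrite ?inR ?eqxx ?v1 ?lexx ?orbT //.
- have [-> _|x0 /= vx] := eqVneq x 0; first by rewrite add0r.
  have [-> _|y0 /= vy] := eqVneq y 0; first by rewrite addr0 vx orbT.
  have [//|xy0 /=] := eqVneq (x + y) 0.
  by apply: le_trans (vD x y x0 y0 xy0); rewrite le_min vx vy.
- have [-> _|x0 /= vx] := eqVneq x 0; first by rewrite mul0r eqxx.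
  have [-> _|y0 /= vy] := eqVneq y 0; first by rewrite mulr0 eqxx.
  by rewrite vM // addr_ge0 ?orbT.
Qed.

Lemma invmxM (K : fieldType) n (M N : 'M[K]_n) :
  M \in unitmx -> N \in unitmx -> invmx (M *m N) = invmx N *m invmx M.
Proof.
move=> MU NU; have MNU : M *m N \in unitmx by rewrite unitmx_mul MU NU.
have MN_inv : M *m N *m (invmx N *m invmx M) = 1%:M.
  by rewrite mulmxA mulmxK // mulmxV.
by rewrite -[LHS]mulmx1 -MN_inv mulmxA mulVmx // mul1mx.
Qed.

Lemma frobmxM (K : fieldType) p n (M N : 'M[K]_n) : p \in [pchar K] ->
  frobmx p (M *m N) = frobmx p M *m frobmx p N.
Proof. by move=> pK; apply: (map_mxM (pFrobenius_aut pK)). Qed.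

Lemma mxOver_frobmx (K : fieldType) (R : semiringClosed K) p n (M : 'M[K]_n) :
  M \is a mxOver R -> frobmx p M \is a mxOver R.
Proof. by move=> /mxOverP MR; apply/mxOverP => i j; rewrite mxE rpredX. Qed.

Lemma mxOver_frob_conj_mulmx (K : fieldType) (R : semiringClosed K) p n
    (B Th U : 'M[K]_n) :
  p \in [pchar K] -> Th \in unitmx -> U \in unitmx ->
  invmx Th *m B *m frobmx p Th \is a mxOver R ->
  U \is a mxOver R -> invmx U \is a mxOver R ->
  invmx (Th *m U) *m B *m frobmx p (Th *m U) \is a mxOver R.
Proof.
move=> pK ThU UU A_R U_R U'_R.
have -> : invmx (Th *m U) *m B *m frobmx p (Th *m U) =
          invmx U *m (invmx Th *m B *m frobmx p Th) *m frobmx p U.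
  by rewrite invmxM // frobmxM // !mulmxA.
apply: mxOverM; last exact: mxOver_frobmx.
exact: mxOverM.
Qed.

Section Generators.
Variables (K : fieldType) (H : falgType K).

Lemma mxcomb_mulmx n (N M : 'M[K]_n) (t : 'I_n -> H) i :
  \sum_k M k i *: mxcomb N t k = mxcomb (N *m M) t i.
Proof.
rewrite /mxcomb; under eq_bigr do rewrite scaler_sumr.
rewrite exchange_big; apply: eq_bigr => j _; rewrite mxE scaler_suml.
by apply: eq_bigr => k _; rewrite scalerA mulrC.
Qed.

Lemma mxcomb1 n (t : 'I_n -> H) i : mxcomb 1%:M t i = t i.
Proof.
rewrite /mxcomb (bigD1 i) //= mxE eqxx scale1r big1 ?addr0 // => j ji.
by rewrite mxE (negbTE ji) scale0r.
Qed.

Lemma span_mxcomb n (Th : 'M[K]_n) (t : 'I_n -> H) : Th \in unitmx ->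
  <<[seq mxcomb Th t i | i <- enum 'I_n]>>%VS = <<[seq t i | i <- enum 'I_n]>>%VS.
Proof.
move=> ThU; have span_sub (N : 'M[K]_n) (u : 'I_n -> H) :
    (<<[seq mxcomb N u i | i <- enum 'I_n]>> <= <<[seq u i | i <- enum 'I_n]>>)%VS.
  apply/span_subvP => _ /mapP [i _ ->]; apply: memv_suml => j _.
  by apply/memvZ/memv_span/map_f; rewrite mem_enum.
apply/eqP; rewrite eqEsubv span_sub /=.
have -> : [seq t i | i <- enum 'I_n] =
          [seq mxcomb (invmx Th) (mxcomb Th t) i | i <- enum 'I_n].
  apply: eq_map => i; rewrite -[RHS]/(\sum_j invmx Th j i *: mxcomb Th t j).
  by rewrite mxcomb_mulmx mulmxV // mxcomb1.
exact: span_sub.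
Qed.

Lemma Rgen_generator (R : {pred K}) n (s : 'I_n -> H) i : Rgen R s (s i).
Proof. by move=> P Ps. Qed.

Lemma Rgen_trans (R : {pred K}) n (s s' : 'I_n -> H) :
  (forall i, Rgen R s (s' i)) -> forall x, Rgen R s' x -> Rgen R s x.
Proof. by move=> ss' x s'x P Ps PR PD PM; apply: s'x => // i; apply: ss'. Qed.

Variable R : semiringClosed K.

Lemma Rgen_lincomb n (s : 'I_n -> H) (u : 'I_n -> K) :
  (forall k, u k \in R) -> Rgen R s (\sum_k u k *: s k).
Proof.
move=> uR P Ps PR PD PM; apply: (big_ind P) => [|x y|k _].
- by have := PR 0 (rpred0 R); rewrite scale0r.
- exact: PD.
- by rewrite -mulr_algl; apply: PM; [apply: PR | apply: Ps].
Qed.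

Lemma Rgen_mxcomb_mulmx n (Th U : 'M[K]_n) (t : 'I_n -> H) i :
  U \is a mxOver R -> Rgen R (mxcomb Th t) (mxcomb (Th *m U) t i).
Proof.
by move=> /mxOverP UR; rewrite -mxcomb_mulmx; apply: Rgen_lincomb => k.
Qed.

Lemma Rgen_mxcomb_unit n (Th U : 'M[K]_n) (t : 'I_n -> H) :
  U \in unitmx -> U \is a mxOver R -> invmx U \is a mxOver R ->
  forall x, Rgen R (mxcomb (Th *m U) t) x <-> Rgen R (mxcomb Th t) x.
Proof.
move=> UU U_R U'_R x; split; apply: Rgen_trans => i.
  exact: Rgen_mxcomb_mulmx.
have -> : mxcomb Th t i = mxcomb (Th *m U *m invmx U) t i by rewrite mulmxK.
exact: Rgen_mxcomb_mulmx.
Qed.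

End Generators.

Section CommutativeAlgebra.
Variables (K : fieldType) (H : falgType K).
Hypothesis mulHC : commutative (@GRing.mul H).
#[local, non_forgetful_inheritance]
HB.instance Definition _ := GRing.PzRing_hasCommutativeMul.Build H mulHC.

Section ReducedMonomials.
Variables (R : semiringClosed K) (p n : nat) (s : 'I_n -> H) (A : 'M[K]_n).
Hypotheses (p_gt1 : (1 < p)%N) (A_R : A \is a mxOver R)
  (s_expp : forall i, s i ^+ p = \sum_j A j i *: s j).

Definition monomial (f : 'I_n -> nat) : H := \prod_i s i ^+ f i.
Definition degree (f : 'I_n -> nat) : nat := (\sum_i f i)%N.
Local Notation exponents := {ffun 'I_n -> 'I_p}.
Definition reduced_monomial (e : exponents) : H := monomial (fun i => e i).

Definition Rspan_reduced (x : H) : Prop :=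
  exists2 c : exponents -> K, forall e, c e \in R &
    x = \sum_e c e *: reduced_monomial e.

Lemma monomial_eq f g : f =1 g -> monomial f = monomial g.
Proof. by move=> fg; apply: eq_bigr => i _; rewrite fg. Qed.

Lemma monomialD f g : monomial (fun i => f i + g i)%N = monomial f * monomial g.
Proof. by rewrite -big_split; apply: eq_bigr => i _; rewrite exprD. Qed.

Lemma monomial0 : monomial (fun=> 0%N) = 1.
Proof. by rewrite /monomial big1. Qed.

Lemma monomial_single j m : monomial (fun i => (i == j) * m)%N = s j ^+ m.
Proof.
rewrite /monomial (bigD1 j) //= eqxx mul1n big1 ?mulr1 // => i /negbTE ->.
by rewrite mul0n.
Qed.

Lemma degree_single_add j m f :
  degree (fun i => (i == j) * m + f i)%N = (m + degree f)%N.
Proof.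
rewrite /degree big_split /= (bigD1 j) //= eqxx mul1n big1 ?addn0 //.
by move=> i /negbTE ->.
Qed.

Lemma Rspan_reducedD x y :
  Rspan_reduced x -> Rspan_reduced y -> Rspan_reduced (x + y).
Proof.
move=> [c cR ->] [d dR ->]; exists (fun e => c e + d e) => [e|].
  exact: rpredD.
by rewrite -big_split; apply: eq_bigr => e _; rewrite scalerDl.
Qed.

Lemma Rspan_reducedZ r x : r \in R -> Rspan_reduced x -> Rspan_reduced (r *: x).
Proof.
move=> rR [c cR ->]; exists (fun e => r * c e) => [e|]; first exact: rpredM.
by rewrite scaler_sumr; apply: eq_bigr => e _; rewrite scalerA.
Qed.

Lemma Rspan_reduced_sum (I : finType) (F : I -> H) :
  (forall i, Rspan_reduced (F i)) -> Rspan_reduced (\sum_i F i).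
Proof.
move=> FR; apply: big_ind => //; last exact: Rspan_reducedD.
by exists (fun=> 0) => [e|]; rewrite ?rpred0 ?big1 // => e _; rewrite scale0r.
Qed.

Lemma Rspan_reduced_reduced_monomial e : Rspan_reduced (reduced_monomial e).
Proof.
exists (fun e' => (e' == e)%:R) => [e'|]; first exact: rpred_nat.
rewrite (bigD1 e) //= eqxx scale1r big1 ?addr0 // => e' /negbTE ->.
by rewrite scale0r.
Qed.

(* Exponent reduction: a monomial with f_j >= p is rewritten using s_j^p,
   which strictly lowers the total degree since p > 1. *)
Lemma Rspan_reduced_monomial f : Rspan_reduced (monomial f).
Proof.
have [d] := ubnP (degree f); elim: d f => // d IHd f lt_f_d.
have [f_lt_p | /forallPn [j]] := boolP [forall i, f i < p]%N.
  pose e : exponents := [ffun i => Ordinal (forallP f_lt_p i)].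
  rewrite (@monomial_eq f (fun i => e i)) => [|i]; last by rewrite ffunE.
  exact: Rspan_reduced_reduced_monomial.
rewrite -leqNgt => p_le_fj; pose g i := (f i - (i == j) * p)%N.
have f_split : f =1 (fun i => (i == j) * p + g i)%N.
  by move=> i; rewrite /g; case: eqP => [->|_]; rewrite ?mul1n ?subnKC ?mul0n.
have deg_f : degree f = (p + degree g)%N.
  by rewrite -(degree_single_add j); apply: eq_bigr => i _; apply: f_split.
rewrite (monomial_eq f_split) monomialD monomial_single s_expp mulr_suml.
apply: Rspan_reduced_sum => l; rewrite -scalerAl; apply: Rspan_reducedZ.
  exact: (mxOverP A_R).
rewrite -[s l]expr1 -monomial_single -monomialD; apply: IHd.
rewrite degree_single_add; lia.
Qed.

Lemma Rspan_reducedM x y :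
  Rspan_reduced x -> Rspan_reduced y -> Rspan_reduced (x * y).
Proof.
move=> [c cR ->] [d dR ->]; rewrite mulr_suml; apply: Rspan_reduced_sum => e.
rewrite mulr_sumr; apply: Rspan_reduced_sum => e'.
rewrite -scalerAl -scalerAr scalerA; apply: Rspan_reducedZ; first exact: rpredM.
by rewrite -monomialD; apply: Rspan_reduced_monomial.
Qed.

Lemma Rspan_reduced_generator i : Rspan_reduced (s i).
Proof. by rewrite -[s i]expr1 -monomial_single; apply: Rspan_reduced_monomial. Qed.

Lemma Rspan_reduced_alg r : r \in R -> Rspan_reduced r%:A.
Proof.
by move=> rR; rewrite -monomial0; apply/Rspan_reducedZ/Rspan_reduced_monomial.
Qed.

Lemma Rgen_Rspan_reduced x : Rgen R s x -> Rspan_reduced x.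
Proof.
apply; [exact: Rspan_reduced_generator | exact: Rspan_reduced_alg |
        exact: Rspan_reducedD | exact: Rspan_reducedM].
Qed.

Definition reduced_basis : #|exponents|.-tuple H :=
  [tuple reduced_monomial (enum_val j) | j < #|exponents|].

Lemma reduced_basis_nth e : reduced_basis`_(enum_rank e) = reduced_monomial e.
Proof. by rewrite nth_mktuple enum_rankK. Qed.

Lemma Rspan_reduced_memv x : Rspan_reduced x -> x \in <<reduced_basis>>%VS.
Proof.
move=> [c _ ->]; apply: memv_suml => e _; apply: memvZ.
by rewrite -reduced_basis_nth memv_span // mem_nth // size_tuple.
Qed.

Lemma span_reduced_basisM u v : u \in <<reduced_basis>>%VS ->
  v \in <<reduced_basis>>%VS -> u * v \in <<reduced_basis>>%VS.
Proof.
move=> /coord_span -> /coord_span ->; rewrite mulr_suml; apply: memv_suml => i _.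
rewrite mulr_sumr; apply: memv_suml => j _; rewrite -scalerAl -scalerAr.
do 2 apply: memvZ; rewrite !nth_mktuple -monomialD.
exact/Rspan_reduced_memv/Rspan_reduced_monomial.
Qed.

Lemma reduced_basisP : agenv <<[seq s i | i <- enum 'I_n]>>%VS = fullv ->
  \dim {:H} = (p ^ n)%N -> basis_of fullv reduced_basis.
Proof.
move=> gen_s dimH; have size_X : size reduced_basis = (p ^ n)%N.
  by rewrite size_tuple card_ffun !card_ord.
rewrite basisEdim size_X dimH leqnn andbT -gen_s; apply: agenv_sub_modl.
  by rewrite -memvE -[1]scale1r; apply/Rspan_reduced_memv/Rspan_reduced_alg/rpred1.
apply/prodvP => u v /(subvP (_ : _ <= _)%VS) su vX; apply: span_reduced_basisM vX.
apply: su; apply/span_subvP => _ /mapP [i _ ->].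
exact/Rspan_reduced_memv/Rspan_reduced_generator.
Qed.

Lemma coord_reduced_basis (c : exponents -> K) e : free reduced_basis ->
  coord reduced_basis (enum_rank e) (\sum_e' c e' *: reduced_monomial e') = c e.
Proof.
move=> freeX; rewrite linear_sum (bigD1 e) //= big1 => [|e' e'e].
  by rewrite addr0 linearZ /= -reduced_basis_nth coord_free // eqxx mulr1.
rewrite linearZ /= -reduced_basis_nth coord_free //.
by rewrite (inj_eq enum_rank_inj) (negbTE e'e) mulr0.
Qed.

Lemma Rgen_lincomb_coef (u : 'I_n -> K) :
  agenv <<[seq s i | i <- enum 'I_n]>>%VS = fullv -> \dim {:H} = (p ^ n)%N ->
  Rgen R s (\sum_k u k *: s k) -> forall k, u k \in R.
Proof.
move=> gen_s dimH /Rgen_Rspan_reduced [c cR su] k.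
have freeX := basis_free (reduced_basisP gen_s dimH).
pose single k : exponents :=
  [ffun i => Ordinal (leq_ltn_trans (leq_b1 (i == k)) p_gt1)].
have s_single k' : s k' = reduced_monomial (single k').
  by rewrite -[s k']expr1 -monomial_single; apply: monomial_eq => i; rewrite ffunE muln1.
have single_inj : injective single.
  move=> k1 k2 /ffunP /(_ k1); rewrite !ffunE eqxx.
  by case: eqP => // _ /(congr1 val).
have coord_s k' :
    coord reduced_basis (enum_rank (single k)) (s k') = (k' == k)%:R.
  by rewrite s_single -reduced_basis_nth coord_free // (inj_eq enum_rank_inj)
             (inj_eq single_inj).
have := cR (single k); rewrite -(coord_reduced_basis c _ freeX) -su linear_sum.
rewrite (bigD1 k) //= big1 ?addr0 => [|k' k'k]; rewrite linearZ /= coord_s.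
  by rewrite eqxx mulr1.
by rewrite (negbTE k'k) mulr0.
Qed.

End ReducedMonomials.

Lemma mxcomb_expp p n (t : 'I_n -> H) (B Th : 'M[K]_n) :
  p \in [pchar K] -> Th \in unitmx -> (forall i, t i ^+ p = \sum_j B j i *: t j) ->
  forall i, mxcomb Th t i ^+ p =
            \sum_l (invmx Th *m B *m frobmx p Th) l i *: mxcomb Th t l.
Proof.
move=> pK ThU t_expp i; have pH : p \in [pchar H] by rewrite pchar_lalg.
rewrite mxcomb_mulmx -!mulmxA mulKVmx // -mxcomb_mulmx.
rewrite -(pFrobenius_autE pH) rmorph_sum; apply: eq_bigr => j _.
by rewrite /= pFrobenius_autE exprZn t_expp mxE.
Qed.

Lemma Rgen_mxcomb_mxOver (R : semiringClosed K) p n (t : 'I_n -> H)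
    (B Th Th' : 'M[K]_n) :
  p \in [pchar K] ->
  agenv <<[seq t i | i <- enum 'I_n]>>%VS = fullv -> \dim {:H} = (p ^ n)%N ->
  (forall i, t i ^+ p = \sum_j B j i *: t j) ->
  Th \in unitmx -> invmx Th *m B *m frobmx p Th \is a mxOver R ->
  (forall i, Rgen R (mxcomb Th t) (mxcomb Th' t i)) ->
  invmx Th *m Th' \is a mxOver R.
Proof.
move=> pK gen_t dimH t_expp ThU A_R s_Th'; apply/mxOverP => k i.
have p_gt1 := prime_gt1 (pcharf_prime pK).
have s_expp := mxcomb_expp pK ThU t_expp.
have gen_s : agenv <<[seq mxcomb Th t i | i <- enum 'I_n]>>%VS = fullv.
  by rewrite span_mxcomb.
have Th'_coords : mxcomb Th' t i = \sum_k (invmx Th *m Th') k i *: mxcomb Th t k.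
  by rewrite mxcomb_mulmx mulKVmx.
apply: (Rgen_lincomb_coef (u := fun k => (invmx Th *m Th') k i) p_gt1 A_R s_expp
         gen_s dimH).
by rewrite -Th'_coords.
Qed.

End CommutativeAlgebra.

Theorem corollary4p3 (p : nat) (K : fieldType) (R : {pred K})
  (H : falgType K) (D : H -> tens2 H) (eps : H -> K) (S : H -> H)
  (n : nat) (t : 'I_n -> H) (B Th Th' : 'M[K]_n) :
  prime p -> p \in [pchar K] -> is_dvr_in R ->
  is_cc_hopf D eps S -> prim_generated D -> \dim {:H} = (p ^ n)%N ->
  basis_of (primv D) [seq t i | i <- enum 'I_n] ->
  (forall i : 'I_n, t i ^+ p = \sum_(j < n) B j i *: t j) ->
  B \is a mxOver R ->
  Th \in unitmx -> invmx Th *m B *m frobmx p Th \is a mxOver R ->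
  Th' \in unitmx ->
  ((invmx Th' *m B *m frobmx p Th' \is a mxOver R /\
    (forall x : H, Rgen R (mxcomb Th' t) x <-> Rgen R (mxcomb Th t) x))
   <->
   (exists U : 'M[K]_n, [/\ U \is a mxOver R, U \in unitmx,
                           invmx U \is a mxOver R & Th' = Th *m U])).
Proof.
move=> _ pK dvr [mulHC _] gen_prim dimH t_basis t_expp _ ThU A_R Th'U.
pose RS : semiringClosed K := HB.pack_for (semiringClosed K) R
  (GRing.isSemiringClosed.Build K R (dvr_semiring_closed dvr)).
have gen_t : agenv <<[seq t i | i <- enum 'I_n]>>%VS = fullv.
  by rewrite (span_basis t_basis).
have coef_R (M M' : 'M[K]_n) : M \in unitmx ->
    invmx M *m B *m frobmx p M \is a mxOver R ->
    (forall i, Rgen R (mxcomb M t) (mxcomb M' t i)) -> invmx M *m M' \is a mxOver R.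
  exact: (Rgen_mxcomb_mxOver mulHC (R := RS) pK gen_t dimH t_expp).
split=> [[A'_R same_order] | [U [U_R UU U'_R ->]]].
  exists (invmx Th *m Th'); split.
  - apply: coef_R ThU A_R _ => i.
    exact: (same_order _).1 (Rgen_generator i).
  - by rewrite unitmx_mul unitmx_inv ThU Th'U.
  - rewrite invmxM ?unitmx_inv // invmxK.
    apply: coef_R Th'U A'_R _ => i.
    exact: (same_order _).2 (Rgen_generator i).
  - by rewrite mulKVmx.
split; first exact: (mxOver_frob_conj_mulmx (R := RS)).
exact: (Rgen_mxcomb_unit (R := RS)).
Qed.
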